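(* Let $g\ge0$, $n\ge1$ with $2-2g-n<0$, and let $\Gamma$ be a trivalent ribbon graph of type $(g,n)$ with edges labelled $1,\dots,6g-6+3n$. Then the oriented adjacency matrix $B$ of $\Gamma$ (a $(6g-6+3n)\times(6g-6+3n)$ skew-symmetric integer matrix) has rank $6g-6+2n$.
   Context: A ribbon graph of type $(g,n)$ is a finite connected graph (loops and multiple edges allowed), all vertices of degree $\ge3$, with a cyclic ordering of the half-edges at each vertex, whose thickening according to these cyclic orderings is an oriented surface of genus $g$ with $n$ boundary components (faces); it is trivalent if all vertices have degree $3$, in which case it has $6g-6+3n$ edges. Let $H$ be the set of half-edges, $s_0:H\to H$ the permutation sending a half-edge to the next half-edge at the same vertex in the (anticlockwise) cyclic order, and $e(h)$ the edge containing $h$. The oriented adjacency matrix is defined by \[B_{ij}=\sum_{h\in H,\ e(h)=i}\Big([e(s_0h)=j]-[e(s_0^{-1}h)=j]\Big),\] where $[\cdot]$ is $1$ if the condition holds and $0$ otherwise; thus $B_{ij}=0$ if edges $i,j$ are not adjacent or $i=j$, and otherwise $B_{ij}$ counts, with signs $\pm1$ determined by the cyclic order, the vertices at which edge $j$ follows or precedes edge $i$ (the paper fixes this sign convention by a diagram; the opposite overall sign gives the same rank). *)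

From mathcomp Require Import all_boot all_order all_algebra all_fingroup.
Set Implicit Arguments. Unset Strict Implicit. Unset Printing Implicit Defensive.
Import GRing.Theory Num.Theory.

(* A trivalent ribbon graph given combinatorially:
   - H : finite set of half-edges,
   - s0 : rotation of half-edges around vertices (vertices = cycles of s0),
   - s1 : the fixed-point-free involution pairing the two half-edges of an edge,
   - e  : the edge labelling, H -> 'I_N, whose fibres are exactly the
          s1-orbits (so edges are labelled bijectively by 0..N-1).
   Convention for permutations in mathcomp: (s * t) x = t (s x). *)

Definition is_ribbon_edge_labelling (H : finType) (s1 : {perm H}) (N : nat)
    (e : H -> 'I_N) : Prop :=
  [/\ forall h, s1 h != h,
      forall h, s1 (s1 h) = h,
      forall h h', e h = e h' <-> (h' = h \/ h' = s1 h)
    & forall i : 'I_N, exists h, e h = i].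

Definition trivalent (H : finType) (s0 : {perm H}) : Prop :=
  forall h, #|porbit s0 h| = 3.

Definition ribbon_connected (H : finType) (s0 s1 : {perm H}) : Prop :=
  forall h h', connect (fun x y => (y == s0 x) || (y == s1 x)) h h'.

(* boundary components (faces) of the thickening: cycles of h |-> s0 (s1 h) *)
Definition ribbon_faces (H : finType) (s0 s1 : {perm H}) : nat :=
  #|porbits (s1 * s0)%g|.

Definition ribbon_vertices (H : finType) (s0 : {perm H}) : nat :=
  #|porbits s0|.

(* thickening is a genus g surface with n boundary components:
   n faces, and Euler characteristic V - E + F = 2 - 2g *)
Definition ribbon_type (H : finType) (s0 s1 : {perm H}) (N g n : nat) : Prop :=
  ribbon_faces s0 s1 = n /\
  ((ribbon_vertices s0)%:Z - N%:Z + n%:Z = 2 - 2 * g%:Z)%R.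

Definition trivalent_ribbon_graph (H : finType) (s0 s1 : {perm H}) (N : nat)
    (e : H -> 'I_N) (g n : nat) : Prop :=
  [/\ is_ribbon_edge_labelling s1 e, trivalent s0,
      ribbon_connected s0 s1 & ribbon_type s0 s1 N g n].

Definition oriented_adjacency (H : finType) (s0 : {perm H}) (N : nat)
    (e : H -> 'I_N) : 'M[int]_N :=
  \matrix_(i < N, j < N)
    (\sum_(h : H | e h == i)
       (((e (s0 h) == j)%:R : int) - ((e ((s0^-1)%g h) == j)%:R : int)))%R.

Definition int_rank (m n : nat) (M : 'M[int]_(m, n)) : nat :=
  \rank (map_mx (intr : int -> rat) M).

From mathcomp Require Import all_boot all_order all_algebra all_fingroup.
From mathcomp Require Import lra zify.
Set Implicit Arguments. Unset Strict Implicit. Unset Printing Implicit Defensive.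
Import GRing.Theory Num.Theory.
Local Open Scope ring_scope.

(* Acting on row vectors, [B^T] sends [x] to the edge sums of
   [z h = x (e (s0 h)) - x (e (s0^-1 h))], so [x] lies in its kernel iff [z] is
   antisymmetric along edges. This happens exactly when [x (e h) = w h + w (s1 h)]
   for some [w] constant on faces: one direction is a computation around each
   trivalent vertex, the other takes [w = (x o e - z) / 2]. Vertices having odd
   degree, [w] is determined by these edge sums, so the face indicator vectors form
   a basis of the kernel and [rank B = #edges - #faces = (6g - 6 + 3n) - n]. *)

Section HalfEdgeFunctions.

Variables (R : realFieldType) (H : finType) (s0 s1 : {perm H}).

Definition rot_diff (f : H -> R) h := f (s0 h) - f ((s0^-1)%g h).

Definition edge_sum (w : H -> R) h := w h + w (s1 h).

Definition balanced (f : H -> R) := forall h, rot_diff f h + rot_diff f (s1 h) = 0.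

Definition face_invariant (w : H -> R) := forall h, w (s0 (s1 h)) = w h.

Lemma eq_balanced f g : f =1 g -> balanced f -> balanced g.
Proof. by move=> fg bal h; rewrite /rot_diff -!fg; apply: bal. Qed.

Hypothesis s1K : involutive s1.
Hypothesis s0_cube : forall h, s0 (s0 (s0 h)) = h.

Lemma s0V h : (s0^-1)%g h = s0 (s0 h).
Proof. by rewrite -{1}(s0_cube h) permK. Qed.

Lemma face_invariant_s0 w : face_invariant w -> forall h, w (s0 h) = w (s1 h).
Proof. by move=> wphi h; rewrite -(wphi (s1 h)) s1K. Qed.

Lemma balanced_edge_sum w : face_invariant w -> balanced (edge_sum w).
Proof.
move=> /face_invariant_s0 ws h; rewrite /rot_diff /edge_sum !s0V.
have := ws (s0 h); have := ws (s0 (s0 h)); have := ws (s1 h); rewrite s1K s0_cube.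
have := ws h; have := ws (s0 (s1 h)); have := ws (s0 (s0 (s1 h))); rewrite s0_cube.
lra.
Qed.

Lemma balanced_edge_sumP f : (forall h, f (s1 h) = f h) -> balanced f ->
  exists2 w, face_invariant w & forall h, f h = edge_sum w h.
Proof.
move=> fs1 bal; exists (fun h => (f h - rot_diff f h) / 2) => h.
  have := bal h; rewrite /rot_diff !s0V -(fs1 h) s0_cube; lra.
by have := bal h; rewrite /edge_sum fs1; lra.
Qed.

(* [w (s0 h) = - w h], and three turns around a vertex give [w h = - w h]. *)
Lemma face_invariant_edge_sum_eq0 w : face_invariant w ->
  (forall h, edge_sum w h = 0) -> forall h, w h = 0.
Proof.
move=> /face_invariant_s0 ws w0 h; have := w0 h; have := w0 (s0 h).
have := w0 (s0 (s0 h)); have := ws h; have := ws (s0 h); have := ws (s0 (s0 h)).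
rewrite /edge_sum s0_cube; lra.
Qed.

End HalfEdgeFunctions.

Lemma sum_mul_eq (R : nzRingType) (m : nat) (x : 'I_m -> R) (a : 'I_m) :
  \sum_(j < m) x j * (a == j)%:R = x a.
Proof.
rewrite (bigD1 a) //= eqxx mulr1 big1 ?addr0 // => j ja.
by rewrite eq_sym (negPf ja) mulr0.
Qed.

Lemma factor_through (T : finType) (R : zmodType) (m : nat) (f : T -> 'I_m)
    (u : T -> R) :
  (forall a b, f a = f b -> u a = u b) -> exists c : 'I_m -> R, forall a, c (f a) = u a.
Proof.
move=> fu; exists (fun k => if [pick a | f a == k] is Some a then u a else 0) => a.
by case: pickP => [b /eqP /fu // | /(_ a)]; rewrite eqxx.
Qed.

Section OrientedAdjacency.

Variables (H : finType) (s0 s1 : {perm H}) (N : nat) (e : H -> 'I_N).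

Local Notation A := (map_mx intr (oriented_adjacency s0 e) : 'M[rat]_N).

Lemma oriented_adjacency_mulmxT (x : 'rV[rat]_N) i :
  (x *m A^T) 0 i = \sum_(h | e h == i) rot_diff s0 (fun a => x 0 (e a)) h.
Proof.
rewrite !mxE; under eq_bigr => j _ do rewrite !mxE rmorph_sum mulr_sumr.
rewrite exchange_big /=; apply: eq_bigr => h _.
rewrite /rot_diff -!(sum_mul_eq (x 0)) -sumrB; apply: eq_bigr => j _.
by rewrite rmorphB /= !rmorph_nat mulrBr.
Qed.

Hypothesis lab : is_ribbon_edge_labelling s1 e.
Hypothesis s0_cube : forall h, s0 (s0 (s0 h)) = h.

Lemma s1K : involutive s1. Proof. by case: lab. Qed.

Lemma edge_s1 h : e (s1 h) = e h.
Proof. by case: lab => _ _ fib _; apply/esym/fib; right. Qed.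

Lemma sum_edge (R : nmodType) (f : H -> R) h :
  \sum_(a | e a == e h) f a = f h + f (s1 h).
Proof.
case: lab => s1_neq _ fib _.
rewrite (bigD1 h) ?eqxx //= (bigD1 (s1 h)) /=; last first.
  by rewrite eq_sym s1_neq andbT edge_s1.
rewrite big1 ?addr0 // => a /andP [/andP [/eqP ea ah] as1].
by move: ah as1; have [->|->] := proj1 (fib h a) (esym ea); rewrite eqxx.
Qed.

Lemma edge_surj i : exists h, e h = i. Proof. by case: lab. Qed.

Lemma oriented_adjacency_kerP (x : 'rV[rat]_N) :
  x *m A^T = 0 <-> balanced s0 s1 (fun a => x 0 (e a)).
Proof.
split=> [xA h | bal].
  have := congr1 (fun M : 'rV_N => M 0 (e h)) xA.
  by rewrite /= oriented_adjacency_mulmxT sum_edge mxE.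
apply/rowP => i; have [h <-] := edge_surj i.
by rewrite oriented_adjacency_mulmxT sum_edge bal mxE.
Qed.

Local Notation phi := (s1 * s0)%g.
Local Notation nF := #|porbits phi|.

Lemma porbit_in_porbits h : porbit phi h \in porbits phi.
Proof. exact: imset_f. Qed.

Definition face_index h : 'I_nF := enum_rank_in (porbit_in_porbits h) (porbit phi h).

Lemma face_indexP h : enum_val (face_index h) = porbit phi h.
Proof. by rewrite /face_index enum_rankK_in ?porbit_in_porbits. Qed.

Lemma face_index_surj k : exists h, face_index h = k.
Proof.
have /imsetP [h _ kh] := enum_valP k; exists h.
by apply: enum_val_inj; rewrite face_indexP.
Qed.

Lemma face_index_phi h : face_index (s0 (s1 h)) = face_index h.
Proof.
apply: enum_val_inj; rewrite !face_indexP.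
by rewrite -[in RHS](porbit_perm phi 1 h) expg1 permM.
Qed.

Lemma face_invariant_face_index (R : realFieldType) (u : H -> R) :
  face_invariant s0 s1 u -> forall h h', face_index h = face_index h' -> u h = u h'.
Proof.
move=> uphi h h' /(congr1 enum_val); rewrite !face_indexP => hh'.
have /porbitP [i ->] : h' \in porbit phi h by rewrite hh' porbit_id.
elim: i => [|i IH]; first by rewrite expg0 perm1.
by rewrite expgSr permM IH permM uphi.
Qed.

Definition face_mx : 'M[rat]_(nF, N) :=
  \matrix_(k, i) \sum_(h | e h == i) (face_index h == k)%:R.

Lemma face_mx_mul (c : 'rV[rat]_nF) h :
  (c *m face_mx) 0 (e h) = edge_sum s1 (fun a => c 0 (face_index a)) h.
Proof.
rewrite !mxE; under eq_bigr => k _ do rewrite !mxE mulr_sumr.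
rewrite exchange_big (eq_bigr (fun a => c 0 (face_index a))) ?sum_edge //.
by move=> a _; rewrite sum_mul_eq.
Qed.

Lemma face_index_invariant (c : 'rV[rat]_nF) :
  face_invariant s0 s1 (fun a => c 0 (face_index a)).
Proof. by move=> h; rewrite face_index_phi. Qed.

Lemma face_mx_free : row_free face_mx.
Proof.
apply: inj_row_free => c c0; apply/rowP => k; have [h <-] := face_index_surj k.
rewrite mxE; apply: (face_invariant_edge_sum_eq0 s1K s0_cube (face_index_invariant c)).
by move=> a; rewrite -face_mx_mul c0 mxE.
Qed.

Lemma face_mx_ker : (face_mx == kermx A^T)%MS.
Proof.
apply/andP; split.
  apply/row_subP => k; apply/sub_kermxP/oriented_adjacency_kerP.
  rewrite rowE; apply: eq_balanced (balanced_edge_sum s1K s0_cube (face_index_invariant _)).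
  by move=> h; rewrite face_mx_mul.
apply/row_subP => r; set x := row r _.
have /oriented_adjacency_kerP bal : x *m A^T = 0 by apply/sub_kermxP; rewrite row_sub.
have [w wphi xw] := balanced_edge_sumP s0_cube (fun h => congr1 (x 0) (edge_s1 h)) bal.
have [c cw] := factor_through (face_invariant_face_index wphi).
apply/submxP; exists (\row_k c k); apply/rowP => i; have [h <-] := edge_surj i.
by rewrite face_mx_mul xw /edge_sum !mxE !cw.
Qed.

Lemma int_rank_oriented_adjacency :
  int_rank (oriented_adjacency s0 e) = (N - #|porbits (s1 * s0)%g|)%N.
Proof.
have := mxrank_ker A^T; rewrite mxrank_tr -(eqmxP face_mx_ker).
have /eqP -> := face_mx_free; have := rank_leq_row A; rewrite /int_rank.
by move=> rA ->; rewrite subKn.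
Qed.

End OrientedAdjacency.

Local Close Scope ring_scope.

Theorem lemma4p3 (g n : nat) (H : finType) (s0 s1 : {perm H})
    (e : H -> 'I_(6 * g + 3 * n - 6)) :
  1 <= n -> 2 < 2 * g + n ->
  trivalent_ribbon_graph s0 s1 e g n ->
  int_rank (oriented_adjacency s0 e) = 6 * g + 2 * n - 6.
Proof.
move=> _ _ [lab trivalent_s0 _ [faces _]].
have s0_cube h : s0 (s0 (s0 h)) = h.
  by have := iter_porbit s0 h; rewrite trivalent_s0.
rewrite (int_rank_oriented_adjacency lab s0_cube).
by move: faces; rewrite /ribbon_faces => ->; lia.
Qed.
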